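(* Let $N_1\ge N_2$, $N_3$, $T$ be nonnegative integers with $T\ge N_1+N_3$. For all positive integers $A,B$ the rate pair $$R_1=\frac{A(T+1-N_1-N_3)}{n},\qquad R_2=\frac{B(T+1-N_2-N_3)}{n},$$ where $n=\max\big(A(T+1-N_3),\,B(T+1-N_3),\,A(T+1-N_1)+B(T+1-N_2)\big)$, is achievable.
   Context: Network: two sources, one relay, one destination; no direct source–destination link. Source $i\in\{1,2\}$ has messages $s_{t,i}\in\mathbb{F}^{k_i}$, $t\ge0$, over a finite field $\mathbb{F}$. A time-invariant $(n_1,n_2,n_3,k_1,k_2,T)_{\mathbb{F}}$ streaming code (unbounded memory): source $i$ sends at time $t$ a packet $x^{(1)}_{t,i}\in\mathbb{F}^{n_i}$, a fixed function of $s_{0,i},\dots,s_{t,i}$; a relay function $g$, the same at every time $t$, takes the packets received from both sources at times $t-T,\dots,t$ together with the relay's previously produced estimates of past source messages, and outputs a packet $x^{(2)}_t\in\mathbb{F}^{n_3}$ and estimates of $s_{t-T,1},s_{t-T,2}$; the destination outputs at time $t+T$ estimates $\hat s_{t,i}$ from its received packets up to time $t+T$. Each link is a packet erasure channel (received packet is the sent one or the erasure symbol $*$). An $N$-erasure sequence has exactly $N$ erased times; link source $i\to$relay suffers an arbitrary $N_i$-erasure sequence, relay$\to$destination an arbitrary $N_3$-erasure sequence. The code is $(N_1,N_2,N_3)$-achievable if $\hat s_{t,i}=s_{t,i}$ always. Rate pair: $R_i=k_i/n$, $n=\max(n_1,n_2,n_3)$; a rate pair is achievable if it is the rate pair of some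 $(N_1,N_2,N_3)$-achievable code (over some finite field). *)

From HB Require Import structures.
From mathcomp Require Import all_boot all_order all_algebra.
Set Implicit Arguments. Unset Strict Implicit. Unset Printing Implicit Defensive.
Import GRing.Theory Num.Theory.

Definition erasure_seq (N : nat) (e : nat -> bool) : Prop :=
  exists s : seq nat, [/\ uniq s, size s = N & forall t, e t = (t \in s)].

Definition channel {X : Type} (e : nat -> bool) (x : nat -> X) (t : nat)
  : option X := if e t then None else Some (x t).

Record code (F : finFieldType) (n1 n2 n3 k1 k2 T : nat) := Code {
  (* source i sends at time t  enc_i [:: s_{0,i}; ...; s_{t,i}] *)
  enc1 : seq 'rV[F]_k1 -> 'rV[F]_n1;
  enc2 : seq 'rV[F]_k2 -> 'rV[F]_n2;
  (* relay function g, the same at every time t: inputs are the received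
     packets of source 1 and source 2 at times t-T,...,t (times < 0 omitted)
     and the relay's previously produced estimates of past source messages
     (those of s_0,...,s_{t-T-1}); outputs the relay packet and the
     estimates of s_{t-T,1}, s_{t-T,2}. *)
  relay : seq (option 'rV[F]_n1) -> seq (option 'rV[F]_n2) ->
          seq ('rV[F]_k1 * 'rV[F]_k2) -> 'rV[F]_n3 * ('rV[F]_k1 * 'rV[F]_k2);
  (* destination: at time t+T, from its received packets at times
     0,...,t+T, outputs estimates of s_{t,1}, s_{t,2}. *)
  dec : seq (option 'rV[F]_n3) -> 'rV[F]_k1 * 'rV[F]_k2
}.

Section Run.
Variables (F : finFieldType) (n1 n2 n3 k1 k2 T : nat).
Variable C : code F n1 n2 n3 k1 k2 T.
Variables (s1 : nat -> 'rV[F]_k1) (s2 : nat -> 'rV[F]_k2).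
Variables (e1 e2 e3 : nat -> bool).

Definition src1_packet (t : nat) : 'rV[F]_n1 := enc1 C (mkseq s1 t.+1).
Definition src2_packet (t : nat) : 'rV[F]_n2 := enc2 C (mkseq s2 t.+1).

Definition relay_rcv1 := channel e1 src1_packet.
Definition relay_rcv2 := channel e2 src2_packet.

(* received packets at times t-T, ..., t (truncated at time 0) *)
Definition window {X : Type} (y : nat -> X) (t : nat) : seq X :=
  [seq y j | j <- iota (t - T) (t - (t - T)).+1].

Fixpoint relay_outs (t : nat) : seq ('rV[F]_n3 * ('rV[F]_k1 * 'rV[F]_k2)) :=
  match t with
  | 0 => [::]
  | t'.+1 =>
      let prev := relay_outs t' in
      rcons prev (relay C (window relay_rcv1 t') (window relay_rcv2 t')
                          (drop T (map snd prev)))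
  end.

Definition relay_packet (t : nat) : 'rV[F]_n3 :=
  (relay C (window relay_rcv1 t) (window relay_rcv2 t)
           (drop T (map snd (relay_outs t)))).1.

Definition dest_rcv := channel e3 relay_packet.

Definition dest_estimate (t : nat) : 'rV[F]_k1 * 'rV[F]_k2 :=
  dec C (mkseq dest_rcv (t + T).+1).
End Run.

Definition achievable_code (F : finFieldType) (n1 n2 n3 k1 k2 T : nat)
  (C : code F n1 n2 n3 k1 k2 T) (N1 N2 N3 : nat) : Prop :=
  forall (s1 : nat -> 'rV[F]_k1) (s2 : nat -> 'rV[F]_k2) (e1 e2 e3 : nat -> bool),
    erasure_seq N1 e1 -> erasure_seq N2 e2 -> erasure_seq N3 e3 ->
    forall t, dest_estimate C s1 s2 e1 e2 e3 t = (s1 t, s2 t).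

Definition rate_pair_achievable (N1 N2 N3 T : nat) (R1 R2 : rat) : Prop :=
  exists (F : finFieldType) (n1 n2 n3 k1 k2 : nat) (C : code F n1 n2 n3 k1 k2 T),
    [/\ achievable_code C N1 N2 N3,
        R1 = (k1%:R / (maxn n1 (maxn n2 n3))%:R)%R
      & R2 = (k2%:R / (maxn n1 (maxn n2 n3))%:R)%R].

From mathcomp Require Import all_boot all_order all_algebra.
From mathcomp Require Import zify.

Import GRing.Theory.

(* Source i sends A (resp. B) parallel copies of a diagonally interleaved MDS code
   with k = T+1-N_i-N_3 message rows and k + N_i coded rows per diagonal, so that
   despite N_i erasures the relay knows row j of the message of time t by time
   t + N_i + j.  It forwards each message with a second MDS code of length k + N_3
   whose row r goes out at time t + N_i + r; that row only involves message rows
   j <= r, and the destination has k of the k + N_3 rows by time t + T.  Both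
   generator matrices are evaluations of the Newton basis at distinct nodes: they
   are MDS, because a nonzero combination of the first k Newton polynomials has
   fewer than k roots, and lower triangular, which is what makes both codes
   causal.  The relay packet is the concatenation of the two forwarding codes. *)

Lemma card_shift_mem L b (s : seq nat) :
  #|[set r : 'I_L | b + r \in s]| <= size s.
Proof.
rewrite cardE -(size_map (fun r : 'I_L => b + r)); apply: uniq_leq_size.
  by rewrite map_inj_uniq ?enum_uniq // => x y /addnI /val_inj.
by move=> x /mapP [r]; rewrite mem_enum inE => r_hit ->.
Qed.

Section NewtonCode.
Context {F : fieldType} (alpha : nat -> F).
Local Open Scope ring_scope.

Definition newton_poly (j : nat) : {poly F} := \prod_(i < j) ('X - (alpha i)%:P).

Definition newton_gen (L a : nat) : 'M[F]_(L, a) :=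
  \matrix_(r, j) \prod_(i < j) (alpha r - alpha i).

Lemma newton_gen_lower L a (r : 'I_L) (j : 'I_a) :
  (r < j)%N -> newton_gen L a r j = 0.
Proof.
by move=> rj; rewrite mxE (bigD1 (Ordinal rj)) //= subrr mul0r.
Qed.

Lemma row_newton_gen_mul L a A (r : 'I_L) (d d' : 'M[F]_(a, A)) :
  (forall j : 'I_a, (j <= r)%N -> row j d = row j d') ->
  row r (newton_gen L a *m d) = row r (newton_gen L a *m d').
Proof.
move=> dd'; apply/rowP => l; rewrite !mxE; apply: eq_bigr => j _.
have [jr | rj] := leqP j r; last by rewrite newton_gen_lower ?mul0r.
by have /rowP/(_ l) := dd' j jr; rewrite !mxE => ->.
Qed.

Lemma size_newton_poly j : size (newton_poly j) = j.+1.
Proof. by rewrite /newton_poly -big_enum size_prod_XsubC size_enum_ord. Qed.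

Lemma coef_newton_poly_top j : (newton_poly j)`_j = 1.
Proof.
have /monicP := monic_prod_XsubC (index_enum 'I_j) xpredT (fun i => alpha i).
by rewrite /lead_coef -/(newton_poly j) size_newton_poly.
Qed.

Lemma size_newton_comb a (c : 'I_a -> F) :
  (size (\sum_(j < a) c j *: newton_poly j)%R <= a)%N.
Proof.
apply: leq_trans (size_sum _ _ _) _; apply/bigmax_leqP => j _.
by apply: leq_trans (size_scale_leq _ _) _; rewrite size_newton_poly.
Qed.

Lemma newton_comb_eq0 a (c : 'I_a -> F) :
  \sum_(j < a) c j *: newton_poly j = 0 -> forall j, c j = 0.
Proof.
elim: a c => [|a IHa] c; first by move=> _ [].
rewrite big_ord_recr /= => Q0.
have c_max : c ord_max = 0.
  have /(congr1 (coefp a)) := Q0; rewrite /= coefD coefZ coef0.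
  by rewrite nth_default ?size_newton_comb // add0r coef_newton_poly_top mulr1.
move: Q0; rewrite c_max scale0r addr0 => /IHa c0 j.
have [j_lt_a | j_ge_a] := ltnP j a.
  by rewrite -(c0 (Ordinal j_lt_a)); congr c; apply: val_inj.
by rewrite (_ : j = ord_max) //; apply: val_inj; move: (ltn_ord j) j_ge_a => /=; lia.
Qed.

Variable L : nat.
Hypothesis alpha_inj : {in [pred i | (i < L)%N] &, injective alpha}.

Lemma horner_newton_comb a A (d : 'M[F]_(a, A)) (r : 'I_L) l :
  (\sum_(j < a) d j l *: newton_poly j).[alpha r] = (newton_gen L a *m d) r l.
Proof.
rewrite horner_sum !mxE; apply: eq_bigr => j _.
rewrite hornerZ horner_prod mulrC mxE; congr (_ * _).
by apply: eq_bigr => i _; rewrite hornerXsubC.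
Qed.

Lemma newton_gen_mul_eq0 {a A} (d : 'M[F]_(a, A)) {b} {s : seq nat} :
  (a + size s <= L)%N ->
  (forall r : 'I_L, (b + r)%N \notin s -> row r (newton_gen L a *m d) = 0) ->
  d = 0.
Proof.
move=> aL d0; set S := [set r : 'I_L | (b + r)%N \notin s].
have a_le_S : (a <= #|S|)%N.
  have := cardsC S; rewrite card_ord.
  have -> : ~: S = [set r : 'I_L | (b + r)%N \in s] by apply/setP => r; rewrite !inE negbK.
  by have := card_shift_mem L b s; lia.
apply/matrixP => j l; rewrite mxE.
pose Q := \sum_(j < a) d j l *: newton_poly j.
suff Q0 : Q = 0 by exact: newton_comb_eq0 Q0 j.
apply: (@roots_geq_poly_eq0 _ _ [seq alpha (val r) | r <- enum S]).
- apply/allP => x /mapP [r]; rewrite mem_enum inE => /d0 /rowP /(_ l) dr0 ->.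
  by rewrite /root horner_newton_comb; move: dr0; rewrite !mxE => ->.
- rewrite map_inj_in_uniq ?enum_uniq // => x y _ _ /alpha_inj xy.
  by apply: val_inj; apply: xy; rewrite inE ltn_ord.
- by rewrite size_map -cardE; apply: leq_trans a_le_S; exact: size_newton_comb.
Qed.

Lemma newton_gen_mul_inj {a A} (d d' : 'M[F]_(a, A)) {b} {s : seq nat} :
  (a + size s <= L)%N ->
  (forall r : 'I_L, (b + r)%N \notin s ->
     row r (newton_gen L a *m d) = row r (newton_gen L a *m d')) ->
  d = d'.
Proof.
move=> aL dd'; apply/eqP; rewrite -subr_eq0; apply/eqP.
apply: (newton_gen_mul_eq0 _ aL) => r /dd'.
by rewrite mulmxBr linearB /= => ->; rewrite subrr.
Qed.

End NewtonCode.

Definition agrees {V : eqType} (y : option V) (v : V) : bool :=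
  if y is Some u then u == v else true.

Lemma agrees_channel {V : eqType} (e : nat -> bool) (x : nat -> V) t v :
  agrees (channel e x t) v = e t || (x t == v).
Proof. by rewrite /channel; case: (e t). Qed.

Section DiagonalCode.
Context {F : finFieldType} (alpha : nat -> F) (A N M T : nat).
Hypothesis NM_le_T : N + M <= T.
Hypothesis alpha_inj : {in [pred i | i < T.+1] &, injective alpha}.

Definition msg_len := T.+1 - N - M.
Definition src_len := msg_len + N.
Definition relay_len := msg_len + M.

Local Notation msg := 'M[F]_(msg_len, A).

Lemma alpha_inj_le {L} : L <= T.+1 -> {in [pred i | i < L] &, injective alpha}.
Proof. by move=> LT; apply: sub_in2 alpha_inj => i; rewrite !inE => /leq_trans; apply. Qed.

(* Diagonal [D] carries row [k] of the message of time [D - N - k.+1], and its coded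
   row [r] is row [r] of the packet of time [D + r - src_len]; so row [k] of the
   message of time [t] is on diagonal [t + N + k.+1], which is completely sent by
   time [t + N + k].  Positions before time 0 are zero. *)
Definition diag_word (X : nat -> msg) (D : nat) : msg :=
  \matrix_(j < msg_len)
    if src_len <= D + j then row (rev_ord j) (X (D + j - src_len)) else 0%R.

Definition src_mx (X : nat -> msg) (t : nat) : 'M[F]_(src_len, A) :=
  \matrix_(r < src_len)
    row r (newton_gen alpha src_len msg_len *m diag_word X (t + src_len - r)).

Definition relay_mx (X : nat -> msg) (t : nat) : 'M[F]_(relay_len, A) :=
  \matrix_(r < relay_len)
    if N + r <= t then row r (newton_gen alpha relay_len msg_len *m X (t - N - r)) else 0%R.

Lemma src_mx_causal X Y t : (forall i, i <= t -> X i = Y i) -> src_mx X t = src_mx Y t.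
Proof.
move=> XY; apply/row_matrixP => r; rewrite !rowK; apply: row_newton_gen_mul => j jr.
by rewrite !rowK; case: ifP => // _; rewrite XY //; move: (ltn_ord r); lia.
Qed.

Lemma diag_word_unique {Y X} {es : seq nat} {tau} :
  size es <= N ->
  (forall t, t <= tau -> t \notin es -> src_mx Y t = src_mx X t) ->
  forall D, D <= tau.+1 -> diag_word Y D = diag_word X D.
Proof.
move=> es_N YX D D_le.
(* Shifting the erasure times by [src_len] puts row [r] of diagonal [D] at [D + r]. *)
apply: (@newton_gen_mul_inj _ alpha src_len (alpha_inj_le _) _ _ _ _ D
          (map (addn src_len) es)).
- by rewrite /src_len /msg_len; lia.
- by rewrite size_map /src_len; lia.
move=> r Dr_ok; have [sent | before_0] := leqP src_len (D + r).
  have t_ok : D + r - src_len \notin es.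
    by apply: contra Dr_ok => t_in; apply/mapP; exists (D + r - src_len) => //; lia.
  have t_le : D + r - src_len <= tau by move: (ltn_ord r); lia.
  have := congr1 (row r) (YX _ t_le t_ok).
  by rewrite !rowK (_ : D + r - src_len + src_len - r = D) //; lia.
apply: row_newton_gen_mul => j jr; have Dj : D + j < src_len by lia.
by rewrite !rowK leqNgt Dj.
Qed.

Lemma src_rows_unique {Y X} {es : seq nat} {tau} :
  size es <= N ->
  (forall t, t <= tau -> t \notin es -> src_mx Y t = src_mx X t) ->
  forall t (k : 'I_msg_len), t + N + k <= tau -> row k (Y t) = row k (X t).
Proof.
move=> es_N YX t k tk; have k_lt := ltn_ord k.
have := congr1 (row (rev_ord k)) (diag_word_unique es_N YX (t + N + k).+1 tk).
have sent : src_len <= (t + N + k).+1 + (msg_len - k.+1) by rewrite /src_len; lia.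
rewrite !rowK rev_ordK /= sent (_ : (t + N + k).+1 + (msg_len - k.+1) - src_len = t) //.
by rewrite /src_len; lia.
Qed.

Lemma relay_mx_rows {Y X tau} :
  (forall t (k : 'I_msg_len), t + N + k <= tau -> row k (Y t) = row k (X t)) ->
  relay_mx Y tau = relay_mx X tau.
Proof.
move=> YX; apply/row_matrixP => r; rewrite !rowK; case: ifP => // Nr.
by apply: row_newton_gen_mul => j jr; apply: YX; lia.
Qed.

Definition diag_enc (l : seq 'rV[F]_(msg_len * A)) : 'rV[F]_(src_len * A) :=
  mxvec (src_mx (fun i => vec_mx (nth 0%R l i)) (size l).-1).

Lemma diag_enc_mkseq (s : nat -> 'rV[F]_(msg_len * A)) t :
  diag_enc (mkseq s t.+1) = mxvec (src_mx (vec_mx \o s) t).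
Proof.
rewrite /diag_enc size_mkseq; congr mxvec.
by apply: src_mx_causal => i it; rewrite /= nth_mkseq.
Qed.

(* At time [tau] the relay remembers the messages of times [< tau - T] and guesses
   those of times [tau - T, ..., tau] as any [c] consistent with its window. *)
Definition history (mem : seq 'rV[F]_(msg_len * A)) (c : {ffun 'I_T.+1 -> msg})
    (i : nat) : msg :=
  if i < size mem then vec_mx (nth 0%R mem i) else c (inord (i - size mem)).

Definition consistent (win : seq (option 'rV[F]_(src_len * A))) mem c : bool :=
  [forall i : 'I_(size win),
     agrees (nth None win i) (mxvec (src_mx (history mem c) (size mem + i)))].

Definition diag_relay win mem : 'rV[F]_(relay_len * A) * 'rV[F]_(msg_len * A) :=
  let c := odflt [ffun => 0%R] [pick c | consistent win mem c] in
  (mxvec (relay_mx (history mem c) (size mem + size win).-1),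
   mxvec (history mem c (size mem))).

Definition diag_dec (ys : seq (option 'rV[F]_(relay_len * A))) : 'rV[F]_(msg_len * A) :=
  let t := (size ys).-1 - T in
  mxvec (odflt 0%R [pick x : msg | [forall r : 'I_relay_len,
    agrees (omap (row r \o vec_mx) (nth None ys (t + N + r)))
           (row r (newton_gen alpha relay_len msg_len *m x))]]).

Section RelayDecoding.
Variables (s : nat -> 'rV[F]_(msg_len * A)) (e : nat -> bool) (es : seq nat) (tau : nat).
Hypothesis es_N : size es <= N.
Hypothesis e_es : forall t, e t = (t \in es).

Local Notation X := (vec_mx \o s).
Local Notation win := (window T (channel e (fun t => diag_enc (mkseq s t.+1))) tau).
Local Notation mem := (mkseq s (tau - T)).

Lemma size_window : size win = (tau - (tau - T)).+1.
Proof. by rewrite size_map size_iota. Qed.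

Lemma nth_window i : i < size win ->
  nth None win i = channel e (fun t => mxvec (src_mx X t)) (tau - T + i).
Proof.
move=> i_lt; rewrite (nth_map 0) ?size_iota -?size_window // nth_iota -?size_window //.
by rewrite /channel diag_enc_mkseq.
Qed.

Lemma history_mem c i : i < tau - T -> history mem c i = X i.
Proof. by move=> i_lt; rewrite /history size_mkseq i_lt nth_mkseq. Qed.

Lemma true_window_consistent :
  consistent win mem [ffun i : 'I_T.+1 => X (tau - T + i)].
Proof.
apply/forallP => i; have i_lt : i < (tau - (tau - T)).+1 by rewrite -size_window.
rewrite nth_window // agrees_channel size_mkseq; apply/orP; right.
apply/eqP; congr mxvec; apply: src_mx_causal => j j_le.
have [j_lt | j_ge] := ltnP j (tau - T); first by rewrite history_mem.
rewrite /history size_mkseq ltnNge j_ge /= ffunE inordK; last by lia.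
by rewrite /= (_ : tau - T + (j - (tau - T)) = j) //; lia.
Qed.

Lemma consistent_src_agree {c} : consistent win mem c ->
  forall t, t <= tau -> t \notin es -> src_mx (history mem c) t = src_mx X t.
Proof.
move=> c_ok t t_le t_ok; have [t_lt | t_ge] := ltnP t (tau - T).
  by apply: src_mx_causal => i i_le; apply: history_mem; lia.
have i_lt : t - (tau - T) < size win by rewrite size_window; lia.
move/forallP: c_ok => /(_ (Ordinal i_lt)); rewrite nth_window //= agrees_channel.
rewrite size_mkseq (_ : tau - T + (t - (tau - T)) = t); last by lia.
by rewrite e_es (negbTE t_ok) => /eqP /(can_inj mxvecK) ->.
Qed.

Lemma diag_relay_correct :
  (diag_relay win mem).1 = mxvec (relay_mx X tau) /\
  (T <= tau -> (diag_relay win mem).2 = s (tau - T)).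
Proof.
rewrite /diag_relay; case: pickP => [c c_ok | no_c]; last first.
  by have := true_window_consistent; rewrite no_c.
have rowsYX := src_rows_unique es_N (consistent_src_agree c_ok).
rewrite size_mkseq size_window (_ : (tau - T + (tau - (tau - T)).+1).-1 = tau) /=;
  last by lia.
split; first by congr mxvec; exact: relay_mx_rows.
move=> T_le; rewrite -[s _]vec_mxK; congr mxvec; apply/row_matrixP => k.
by apply: rowsYX; move: (ltn_ord k); rewrite /msg_len; lia.
Qed.

End RelayDecoding.

Lemma diag_dec_correct (s : nat -> 'rV[F]_(msg_len * A)) e (es : seq nat) t :
  size es <= M -> (forall t, e t = (t \in es)) ->
  diag_dec (mkseq (channel e (mxvec \o relay_mx (vec_mx \o s))) (t + T).+1) = s t.
Proof.
move=> es_M e_es; rewrite /diag_dec size_mkseq /= (_ : t + T - T = t); last by lia.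
set ys := mkseq _ _.
have row_ys (r : 'I_relay_len) : omap (row r \o vec_mx) (nth None ys (t + N + r)) =
    channel e (fun=> row r (newton_gen alpha relay_len msg_len *m vec_mx (s t))) (t + N + r).
  rewrite nth_mkseq; last by move: (ltn_ord r); rewrite /relay_len /msg_len; lia.
  rewrite /channel; case: (e _) => //=; rewrite mxvecK rowK ifT; last by lia.
  by rewrite (_ : t + N + r - N - r = t); last by lia.
case: pickP => [x x_ok | /(_ (vec_mx (s t)))]; last first.
  by move/negP; case; apply/forallP => r; rewrite row_ys agrees_channel eqxx orbT.
rewrite -[s t]vec_mxK; congr mxvec.
apply: (@newton_gen_mul_inj _ alpha relay_len (alpha_inj_le _) _ _ _ _ (t + N) es).
- by rewrite /relay_len /msg_len; lia.
- by rewrite /relay_len; lia.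
move=> r r_ok; move/forallP: x_ok => /(_ r).
by rewrite row_ys agrees_channel e_es (negbTE r_ok) => /eqP.
Qed.

End DiagonalCode.

Lemma map_mkseq {T U : Type} (f : T -> U) (g : nat -> T) n :
  map f (mkseq g n) = mkseq (f \o g) n.
Proof. by rewrite /mkseq -map_comp. Qed.

Lemma relay_packet_of_relay_correct {F : finFieldType} {n1 n2 n3 k1 k2 T}
    (C : code F n1 n2 n3 k1 k2 T) s1 s2 e1 e2 (P : nat -> 'rV[F]_n3) :
  (forall tau,
     let o := relay C (window T (relay_rcv1 C s1 e1) tau)
                      (window T (relay_rcv2 C s2 e2) tau)
                      (mkseq (fun i => (s1 i, s2 i)) (tau - T)) in
     o.1 = P tau /\ (T <= tau -> o.2 = (s1 (tau - T), s2 (tau - T)))) ->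
  relay_packet C s1 s2 e1 e2 =1 P.
Proof.
move=> relay_ok.
pose out i := relay C (window T (relay_rcv1 C s1 e1) i) (window T (relay_rcv2 C s2 e2) i)
  (drop T (map snd (relay_outs C s1 s2 e1 e2 i))).
have outsE tau : relay_outs C s1 s2 e1 e2 tau = mkseq out tau.
  by elim: tau => [|tau IH] //; rewrite mkseqS -IH.
have memE tau : drop T (map snd (relay_outs C s1 s2 e1 e2 tau)) =
    mkseq (fun i => (s1 i, s2 i)) (tau - T).
  elim/ltn_ind: tau => tau IH.
  apply: (@eq_from_nth _ (0%R, 0%R)) => [|i].
    by rewrite size_drop size_map outsE !size_mkseq.
  rewrite size_drop size_map outsE size_mkseq => i_lt.
  rewrite nth_drop (nth_map 0%R) ?size_mkseq; last by lia.
  rewrite !nth_mkseq //; last by lia.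
  rewrite /out IH; last by lia.
  by rewrite (relay_ok _).2 ?leq_addr // addKn.
by move=> tau; rewrite /relay_packet memE; exact: (relay_ok tau).1.
Qed.

Section PairCode.
Context {F : finFieldType} (alpha : nat -> F) (A B N1 N2 N3 T : nat).
Hypothesis N13_le_T : N1 + N3 <= T.
Hypothesis N23_le_T : N2 + N3 <= T.
Hypothesis alpha_inj : {in [pred i | i < T.+1] &, injective alpha}.

Definition pair_code : code F (src_len N1 N3 T * A) (src_len N2 N3 T * B)
    (relay_len N1 N3 T * A + relay_len N2 N3 T * B)
    (msg_len N1 N3 T * A) (msg_len N2 N3 T * B) T :=
  @Code F _ _ _ _ _ T (diag_enc alpha A N1 N3 T) (diag_enc alpha B N2 N3 T)
    (fun w1 w2 mem =>
       let o1 := diag_relay alpha A N1 N3 T w1 (map fst mem) in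
       let o2 := diag_relay alpha B N2 N3 T w2 (map snd mem) in
       (row_mx o1.1 o2.1, (o1.2, o2.2)))
    (fun ys => (diag_dec alpha A N1 N3 T (map (omap lsubmx) ys),
                diag_dec alpha B N2 N3 T (map (omap rsubmx) ys))).

Lemma pair_code_relayE w1 w2 mem :
  let o1 := diag_relay alpha A N1 N3 T w1 (map fst mem) in
  let o2 := diag_relay alpha B N2 N3 T w2 (map snd mem) in
  relay pair_code w1 w2 mem = (row_mx o1.1 o2.1, (o1.2, o2.2)).
Proof. by []. Qed.

Lemma pair_code_decE ys : dec pair_code ys =
  (diag_dec alpha A N1 N3 T (map (omap lsubmx) ys),
   diag_dec alpha B N2 N3 T (map (omap rsubmx) ys)).
Proof. by []. Qed.

Lemma pair_code_achievable : achievable_code pair_code N1 N2 N3.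
Proof.
move=> s1 s2 e1 e2 e3 [es1 [_ es1_N e1E]] [es2 [_ es2_N e2E]] [es3 [_ es3_N e3E]] t.
pose P1 tau := mxvec (relay_mx alpha A N1 N3 T (vec_mx \o s1) tau).
pose P2 tau := mxvec (relay_mx alpha B N2 N3 T (vec_mx \o s2) tau).
have relayE : relay_packet pair_code s1 s2 e1 e2 =1 fun tau => row_mx (P1 tau) (P2 tau).
  apply: relay_packet_of_relay_correct => tau.
  have [o1 o1'] := diag_relay_correct alpha A N1 N3 T N13_le_T alpha_inj
                     s1 e1 es1 tau (eq_leq es1_N) e1E.
  have [o2 o2'] := diag_relay_correct alpha B N2 N3 T N23_le_T alpha_inj
                     s2 e2 es2 tau (eq_leq es2_N) e2E.
  cbv zeta; rewrite pair_code_relayE !map_mkseq o1 o2.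
  by split=> // T_le; rewrite o1' // o2'.
rewrite /dest_estimate pair_code_decE !map_mkseq.
rewrite -(diag_dec_correct alpha A N1 N3 T N13_le_T alpha_inj s1 e3 es3 t (eq_leq es3_N) e3E).
rewrite -(diag_dec_correct alpha B N2 N3 T N23_le_T alpha_inj s2 e3 es3 t (eq_leq es3_N) e3E).
by congr (diag_dec _ _ _ _ _ _, diag_dec _ _ _ _ _ _); apply: eq_mkseq => i;
  rewrite /= /dest_rcv /channel relayE; case: (e3 i); rewrite /= ?row_mxKl ?row_mxKr.
Qed.

End PairCode.

Lemma natr_Fp_inj p L : prime p -> L <= p ->
  {in [pred i | i < L] &, injective (fun i => (i%:R : 'F_p)%R)}.
Proof.
move=> p_prime L_le i j; rewrite !inE => /leq_trans/(_ L_le) i_lt.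
move=> /leq_trans/(_ L_le) j_lt ij.
by rewrite -(modn_small i_lt) -(modn_small j_lt) -!val_Fp_nat // ij.
Qed.

Theorem lemma7 (N1 N2 N3 T A B : nat) :
  (N2 <= N1)%N -> (N1 + N3 <= T)%N -> (0 < A)%N -> (0 < B)%N ->
  let n := maxn (A * (T + 1 - N3))
             (maxn (B * (T + 1 - N3)) (A * (T + 1 - N1) + B * (T + 1 - N2))) in
  rate_pair_achievable N1 N2 N3 T
    ((A * (T + 1 - N1 - N3))%:R / n%:R)%R
    ((B * (T + 1 - N2 - N3))%:R / n%:R)%R.
Proof.
move=> N21 N13 _ _ n.
have [p T_lt_p p_prime] := prime_above T.
exists 'F_p, _, _, _, _, _, (pair_code (fun i => (i%:R)%R) A B N1 N2 N3 T).
split.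
- by apply: pair_code_achievable; [lia | lia | exact: natr_Fp_inj p_prime T_lt_p].
- by congr (_%:R / _%:R)%R; rewrite /n /src_len /relay_len /msg_len; lia.
- by congr (_%:R / _%:R)%R; rewrite /n /src_len /relay_len /msg_len; lia.
Qed.
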